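(* Let $\mathcal D$ be an ordered, oriented Descartes configuration. Then the curvature-center coordinate matrix $M_{\mathcal D}$ is an integer matrix if and only if three of its four rows are integer vectors; equivalently, iff $\mathcal D$ contains three circles each having integer signed curvature $b$ and curvature$\times$center $b(x+iy)\in\mathbb Z[i]$.
   Context: Circles are taken in $\hat{\mathbb C}=\mathbb R^2\cup\{\infty\}$; lines count as circles. A Descartes configuration is a set of four mutually tangent circles with disjoint interiors; an ordered, oriented one carries an ordering and a total orientation, with signed curvatures $b_i$ (reciprocal radius, negative if the circle's interior is unbounded, $0$ for lines, all reversed for negative orientation). The curvature-center coordinate matrix $M_{\mathcal D}$ is the $4\times3$ matrix with $i$-th row $(b_i,b_ix_i,b_iy_i)$, $(x_i,y_i)$ the center of the $i$-th circle; for a line the row is $(0,n_x,n_y)$, $n$ the unit normal pointing into its interior half-plane (for a line, ''curvature$\times$center'' means $n_x+in_y$). *)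

From HB Require Import structures.
From mathcomp Require Import all_boot all_order all_algebra.
From mathcomp Require Import reals.
Set Implicit Arguments. Unset Strict Implicit. Unset Printing Implicit Defensive.
Import Order.TTheory GRing.Theory Num.Theory.
Local Open Scope ring_scope.

Section Circles.
Variable R : realType.

(* Points of the extended plane \hat C = R^2 \cup {oo}: None is oo. *)
Definition point := (R * R)%type.
Definition ext_point := option point.

Definition sqdist (p q : point) : R := (p.1 - q.1) ^+ 2 + (p.2 - q.2) ^+ 2.
Definition dot (n p : point) : R := n.1 * p.1 + n.2 * p.2.

(* An oriented circle:
   - OCirc c r true  : circle of center c, radius r, interior = open disk;
   - OCirc c r false : same circle, interior = complement of closed disk (contains oo);
   - OLine n d       : line {p | n.p = d} (plus oo), n a unit normal pointing into
                       the interior half-plane {p | n.p > d}. *)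
Inductive ocircle :=
| OCirc of point & R & bool
| OLine of point & R.

Definition wf_ocircle (C : ocircle) : Prop :=
  match C with
  | OCirc _ r _ => 0 < r
  | OLine n _ => dot n n = 1
  end.

Definition on_circle (C : ocircle) (z : ext_point) : Prop :=
  match C, z with
  | OCirc c r _, Some p => sqdist p c = r ^+ 2
  | OCirc _ _ _, None => False
  | OLine n d, Some p => dot n p = d
  | OLine _ _, None => True
  end.

Definition interior (C : ocircle) (z : ext_point) : Prop :=
  match C, z with
  | OCirc c r true, Some p => sqdist p c < r ^+ 2
  | OCirc _ _ true, None => False
  | OCirc c r false, Some p => r ^+ 2 < sqdist p c
  | OCirc _ _ false, None => True
  | OLine n d, Some p => d < dot n p
  | OLine _ _, None => False
  end.

Definition reverse (C : ocircle) : ocircle :=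
  match C with
  | OCirc c r b => OCirc c r (~~ b)
  | OLine n d => OLine (- n.1, - n.2) (- d)
  end.

Definition tangent (C1 C2 : ocircle) : Prop :=
  exists! z : ext_point, on_circle C1 z /\ on_circle C2 z.

Definition disjoint_interiors (C1 C2 : ocircle) : Prop :=
  forall z, ~ (interior C1 z /\ interior C2 z).

(* An ordered, oriented Descartes configuration: four mutually tangent circles,
   with total orientation either positive (interiors pairwise disjoint) or
   negative (all orientations reversed from a positive one). *)
Definition descartes_config (D : 'I_4 -> ocircle) : Prop :=
  (forall i, wf_ocircle (D i)) /\
  (forall i j : 'I_4, i != j -> tangent (D i) (D j)) /\
  ((forall i j : 'I_4, i != j -> disjoint_interiors (D i) (D j)) \/
   (forall i j : 'I_4, i != j ->
      disjoint_interiors (reverse (D i)) (reverse (D j)))).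

Definition curvature (C : ocircle) : R :=
  match C with
  | OCirc _ r true => r^-1
  | OCirc _ r false => - r^-1
  | OLine _ _ => 0
  end.

(* "curvature x center" (b x, b y); for a line, the unit normal into its interior *)
Definition curv_center (C : ocircle) : point :=
  match C with
  | OCirc c _ _ => (curvature C * c.1, curvature C * c.2)
  | OLine n _ => n
  end.

Definition cc_matrix (D : 'I_4 -> ocircle) : 'M[R]_(4, 3) :=
  \matrix_(i < 4, j < 3)
    nth 0 [:: curvature (D i); (curv_center (D i)).1; (curv_center (D i)).2] j.

End Circles.

From HB Require Import structures.
From mathcomp Require Import all_boot all_order all_algebra.
From mathcomp Require Import reals.
From mathcomp Require Import perm ring lra zify.
Import Order.TTheory GRing.Theory Num.Theory.
Local Open Scope ring_scope.
Set Implicit Arguments. Unset Strict Implicit. Unset Printing Implicit Defensive.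

(* Use the augmented curvature-center coordinates w = (b̄, b, bx, by) and the
   Lorentz form Q(w, w') = x x' + y y' - (b b̄' + b̄ b') / 2.  A point z lies on,
   resp. inside, an oriented circle C iff Q(w(C), w(z)) = 0, resp. > 0.  Each
   circle has Q(w(C), w(C)) = 1, and inverting at the tangency point turns two
   tangent circles with disjoint interiors into parallel lines with opposite
   normals, whence Q(w(C), w(C')) = -1.  So the coordinate matrix W of a
   Descartes configuration satisfies W L W^T = 2I - J, hence
   W^T (2I - J)^-1 W = L^-1.  For the excess d = w4 - w1 - w2 - w3 this
   expresses each product d_c d_c', with c, c' among b, bx, by, as an integer
   polynomial in the first three rows; taking determinants gives
   d_b = +- det (b_i, b_i x_i, b_i y_i), an integer.  If d_b <> 0, then d_x
   and d_y are rationals with integer squares; if d_b = 0, then Q(d, d) = 4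
   forces (d_x / 2)^2 and (d_y / 2)^2 into {0, 1}.  Either way the fourth row
   is integral. *)

Lemma int_of_sqr_eq (R : archiNumDomainType) (x m : R) :
  m \is a Num.int -> x ^+ 2 = m ^+ 2 -> x \is a Num.int.
Proof. by move=> mZ /eqP; rewrite eqf_sqr => /orP[|] /eqP ->; rewrite ?rpredN. Qed.

Lemma int_of_mul_sqr (R : archiNumFieldType) (b m : R) :
  b \is a Num.int -> b != 0 -> b * m \is a Num.int -> m ^+ 2 \is a Num.int ->
  m \is a Num.int.
Proof.
move=> /intrP[k ->] b0 /intrP[l bm] /intrP[n m2].
have k0 : k != 0 by apply: contraNneq b0 => ->.
have mE : m = l%:~R / k%:~R by rewrite -bm mulrAC divff ?mul1r // intr_eq0.
have /eqP : (l ^+ 2)%:~R = (n * k ^+ 2)%:~R :> R.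
  rewrite intrM rmorphXn [(k ^+ 2)%:~R]rmorphXn -m2 mE expr_div_n.
  by rewrite divfK // expf_neq0 ?intr_eq0.
rewrite eqr_int => /eqP l2.
have /dvdzP[q lE] : (k %| l)%Z.
  by rewrite -(dvdz_pexp2r _ _ (isT : 0 < 2)%N); apply/dvdzP; exists n.
by rewrite mE lE intrM mulfK ?intr_eq0 // intr_int.
Qed.

Lemma int_of_sqr_le1 (R : archiRealDomainType) (x : R) :
  x ^+ 2 \is a Num.int -> x ^+ 2 <= 1 -> x \is a Num.int.
Proof.
move=> /intrP[n x2] x2le1.
have n0 : 0 <= n by rewrite -(ler_int R) -x2 sqr_ge0.
have n1 : n <= 1 by rewrite -(ler_int R) -x2.
have [n_eq0|n_eq1] : n = 0 \/ n = 1 by lia.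
  by move/eqP: x2; rewrite n_eq0 mulr0z sqrf_eq0 => /eqP ->.
by move/eqP: x2; rewrite n_eq1 mulr1z sqrf_eq1 => /orP[]/eqP ->; rewrite ?rpredN rpred1.
Qed.

Definition det3 (R : comPzRingType) (a11 a12 a13 a21 a22 a23 a31 a32 a33 : R) : R :=
  a11 * (a22 * a33 - a23 * a32) - a12 * (a21 * a33 - a23 * a31)
  + a13 * (a21 * a32 - a22 * a31).

Lemma big_ord4 (V : nmodType) (F : 'I_4 -> V) :
  \sum_(i < 4) F i = F 0 + F 1 + F 2 + F 3.
Proof.
rewrite !big_ord_recl big_ord0 addr0 !addrA.
by congr (F _ + F _ + F _ + F _); apply: val_inj.
Qed.

Lemma mulmx_congruence_inv (R : comUnitRingType) n (A L L' G G' : 'M[R]_n) :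
  A *m L *m A^T = G -> G *m G' = 1%:M -> L' *m L = 1%:M ->
  A^T *m G' *m A = L'.
Proof.
move=> ALA GG' L'L.
have /mulmx1C XA : A *m (L *m A^T *m G') = 1%:M by rewrite !mulmxA ALA GG'.
have LX : L *m (A^T *m G' *m A) = 1%:M by rewrite !mulmxA; exact: XA.
by rewrite -[LHS]mul1mx -L'L -mulmxA LX mulmx1.
Qed.

Section AugmentedCoordinates.
Variable R : realType.
Implicit Types (p q w : point R).

Lemma dot_self_eq0 q : (dot q q == 0) = (q == 0).
Proof.
case: q => q1 q2; rewrite /dot /= -!expr2 paddr_eq0 ?sqr_ge0 // !sqrf_eq0.
by rewrite xpair_eqE.
Qed.

Lemma dot_self_ge0 q : 0 <= dot q q.
Proof. by rewrite /dot addr_ge0 // -expr2 sqr_ge0. Qed.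

Lemma disjoint_lines_antiparallel w w' (c c' : R) :
  dot w w = 1 -> dot w' w' = 1 ->
  (forall q, ~ (dot w q = c /\ dot w' q = c')) ->
  (forall q, ~ (c < dot w q /\ c' < dot w' q)) ->
  dot w w' = -1.
Proof.
case: w w' => [w1 w2] [w1' w2']; rewrite /dot /= => ww w'w' meet sides.
set d := w1 * w2' - w2 * w1'.
have [d0|dn0] := eqVneq d 0; last first.
  case: (meet ((c * w2' - w2 * c') / d, (w1 * c' - c * w1') / d)).
  by rewrite /=; split; rewrite /d; field; rewrite -/d.
have cos2 : (w1 * w1' + w2 * w2') ^+ 2 = 1.
  by rewrite -[1]mulr1 -{1}ww -w'w'; move: d0; rewrite /d => /eqP; nra.
have /eqP : (w1 * w1' + w2 * w2' - 1) * (w1 * w1' + w2 * w2' + 1) = 0.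
  by rewrite -subr_sqr cos2 expr1n subrr.
rewrite mulf_eq0 subr_eq0 addr_eq0 => /orP[/eqP cos1|/eqP //].
pose t := `|c| + `|c'| + 1.
case: (sides (t * w1, t * w2)) => /=.
have -> : w1 * (t * w1) + w2 * (t * w2) = t by rewrite -[t]mulr1 -{3}ww; ring.
have -> : w1' * (t * w1) + w2' * (t * w2) = t.
  by rewrite -[t]mulr1 -{3}cos1; ring.
by rewrite /t; split; have := ler_norm c; have := ler_norm c'; have := normr_ge0 c;
  have := normr_ge0 c'; lra.
Qed.

Record acoord := ACoord { co_curv : R; curv : R; curv_x : R; curv_y : R }.

Definition lorentz (a a' : acoord) : R :=
  curv_x a * curv_x a' + curv_y a * curv_y a'
  - (curv a * co_curv a' + co_curv a * curv a') / 2.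

Lemma lorentz_sym a a' : lorentz a a' = lorentz a' a.
Proof. by rewrite /lorentz; ring. Qed.

Definition pt_coord (z : ext_point R) : acoord :=
  match z with
  | Some p => ACoord (dot p p) 1 p.1 p.2
  | None => ACoord 1 0 0 0
  end.

(* The inverse of the inversion centred at [z0] (with [0] sent to [oo]), or the
   identity chart if [z0 = oo]: circles through [z0] become lines. *)
Definition chart (z0 : ext_point R) q : ext_point R :=
  match z0 with
  | Some p => if q == 0 then None
              else Some (p.1 + q.1 / dot q q, p.2 + q.2 / dot q q)
  | None => Some q
  end.

Definition chart_weight (z0 : ext_point R) q : R :=
  if z0 is Some _ then (if q == 0 then 1 else (dot q q)^-1) else 1.

Definition chart_normal (z0 : ext_point R) (a : acoord) : point R :=
  if z0 is Some p then (curv_x a - curv a * p.1, curv_y a - curv a * p.2)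
  else (curv_x a, curv_y a).

Definition chart_offset (z0 : ext_point R) (a : acoord) : R :=
  (if z0 is Some _ then curv a else co_curv a) / 2.

Lemma chart_weight_gt0 z0 q : 0 < chart_weight z0 q.
Proof.
case: z0 => [p|] //=; case: eqVneq => [//|q0].
by rewrite invr_gt0 lt_def dot_self_eq0 q0 dot_self_ge0.
Qed.

Lemma chart_neq z0 q : chart z0 q <> z0.
Proof.
case: z0 => [[x0 y0]|] //=; case: eqVneq => [//|q0] [].
have qq0 : dot q q != 0 by rewrite dot_self_eq0.
move: q0; case: q qq0 => q1 q2 /= qq0 /negP q0 e1 e2; apply: q0.
have /eqP : q1 / dot (q1, q2) (q1, q2) = 0 by lra.
have /eqP : q2 / dot (q1, q2) (q1, q2) = 0 by lra.
by rewrite !mulf_eq0 invr_eq0 (negbTE qq0) !orbF xpair_eqE => -> ->.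
Qed.

Lemma co_curv_on_point a p : lorentz a (pt_coord (Some p)) = 0 ->
  co_curv a = 2 * (curv_x a * p.1 + curv_y a * p.2) - curv a * dot p p.
Proof. by rewrite /lorentz /=; lra. Qed.

Lemma curv_on_infinity a : lorentz a (pt_coord None) = 0 -> curv a = 0.
Proof. by rewrite /lorentz /=; lra. Qed.

Lemma lorentz_chart a z0 q : lorentz a (pt_coord z0) = 0 ->
  lorentz a (pt_coord (chart z0 q))
  = chart_weight z0 q * (dot (chart_normal z0 a) q - chart_offset z0 a).
Proof.
case: z0 => [p /co_curv_on_point|/curv_on_infinity] ea /=.
- case: eqVneq => [->|q0]; first by rewrite /lorentz /chart_offset /dot /=; ring.
  have qq0 : dot q q != 0 by rewrite dot_self_eq0.
  move: qq0; rewrite /lorentz /chart_offset /= ea /dot /=.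
  by case: q q0 => q1 q2 /= _ ?; field.
- by rewrite /lorentz /chart_offset /dot /= ea; ring.
Qed.

Lemma lorentz_chart_normal a a' z0 :
  lorentz a (pt_coord z0) = 0 -> lorentz a' (pt_coord z0) = 0 ->
  lorentz a a' = dot (chart_normal z0 a) (chart_normal z0 a').
Proof.
case: z0 => [p /co_curv_on_point ea /co_curv_on_point ea'
             |/curv_on_infinity ea /curv_on_infinity ea'].
- by rewrite /lorentz /= ea ea' /dot /=; field.
- by rewrite /lorentz /dot /= ea ea'; ring.
Qed.

Lemma lorentz_eqN1 a a' :
  lorentz a a = 1 -> lorentz a' a' = 1 ->
  (exists! z, lorentz a (pt_coord z) = 0 /\ lorentz a' (pt_coord z) = 0) ->
  (forall z, ~ (0 < lorentz a (pt_coord z) /\ 0 < lorentz a' (pt_coord z))) ->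
  lorentz a a' = -1.
Proof.
move=> aa a'a' [z0 [[a0 a'0] tangent_at]] sides.
rewrite (lorentz_chart_normal a0 a'0).
apply: (@disjoint_lines_antiparallel _ _ (chart_offset z0 a) (chart_offset z0 a')).
- by rewrite -(lorentz_chart_normal a0 a0).
- by rewrite -(lorentz_chart_normal a'0 a'0).
- move=> q [e e']; apply: (@chart_neq z0 q); apply/esym/tangent_at.
  by rewrite !lorentz_chart // e e' !subrr !mulr0.
- move=> q [h h']; apply: (sides (chart z0 q)).
  by rewrite !lorentz_chart //; split; apply: mulr_gt0 (chart_weight_gt0 _ _) _;
    rewrite subr_gt0.
Qed.

Implicit Types (C : ocircle R) (z : ext_point R) (D : 'I_4 -> ocircle R).

(* The signed curvature of the image of [C] under inversion in the unit
   circle. *)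
Definition co_curvature (C : ocircle R) : R :=
  match C with
  | OCirc c r b => (if b then 1 else -1) * (dot c c - r ^+ 2) / r
  | OLine _ d => 2 * d
  end.

Definition acoord_of (C : ocircle R) : acoord :=
  ACoord (co_curvature C) (curvature C) (curv_center C).1 (curv_center C).2.

Lemma lorentz_acoord_self C : wf_ocircle C -> lorentz (acoord_of C) (acoord_of C) = 1.
Proof.
case: C => [[c1 c2] r b /= r0|[n1 n2] d]; rewrite /lorentz /= /dot /=.
  have r_neq0 : r != 0 by rewrite gt_eqF.
  by case: b; field.
by rewrite /dot /= => <-; ring.
Qed.

Lemma lorentz_circle_pt (c : point R) (r : R) (b : bool) z : 0 < r ->
  lorentz (acoord_of (OCirc c r b)) (pt_coord z) * (2 * r)
  = (if b then 1 else -1) * (if z is Some p then r ^+ 2 - sqdist p c else -1).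
Proof.
move=> r0; have r_neq0 : r != 0 by rewrite gt_eqF.
by case: b; rewrite /acoord_of /=; case: z => [[p1 p2]|]; case: c => c1 c2;
  rewrite /lorentz /sqdist /= /dot /=; field.
Qed.

Lemma on_circle_lorentz C z : wf_ocircle C ->
  on_circle C z <-> lorentz (acoord_of C) (pt_coord z) = 0.
Proof.
case: C => [c r b /= r0|n d _].
  by have := lorentz_circle_pt c b z r0; case: b; case: z => [p|] /=; split=> h; nra.
by case: z => [p|]; rewrite /lorentz /= /dot /=; split=> h //; lra.
Qed.

Lemma interior_lorentz C z : wf_ocircle C ->
  interior C z <-> 0 < lorentz (acoord_of C) (pt_coord z).
Proof.
case: C => [c r b /= r0|n d _].
  by have := lorentz_circle_pt c b z r0; case: b; case: z => [p|] /=; split=> h; nra.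
by case: z => [p|]; rewrite /lorentz /= /dot /=; split=> h //; lra.
Qed.

Lemma wf_reverse C : wf_ocircle C -> wf_ocircle (reverse C).
Proof. by case: C => [c r b|[n1 n2] d] //=; rewrite /dot /= => <-; ring. Qed.

Lemma on_circle_reverse C z : on_circle (reverse C) z <-> on_circle C z.
Proof. by case: C => [c r b|[n1 n2] d]; case: z => [p|] //=; rewrite /dot /=; lra. Qed.

Lemma tangent_reverse C C' : tangent C C' -> tangent (reverse C) (reverse C').
Proof.
case=> z [[o o'] uniq]; exists z; split=> [|z' [e e']].
  by split; apply/on_circle_reverse.
by apply: uniq; split; apply/on_circle_reverse.
Qed.

Lemma lorentz_reverse C a : lorentz (acoord_of (reverse C)) a = - lorentz (acoord_of C) a.
Proof. by case: C => [c r []|n d]; rewrite /lorentz /=; ring. Qed.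

Lemma lorentz_acoord_tangent C C' : wf_ocircle C -> wf_ocircle C' ->
  tangent C C' -> disjoint_interiors C C' ->
  lorentz (acoord_of C) (acoord_of C') = -1.
Proof.
move=> wC wC' [z [[o o'] uniq]] disj.
apply: lorentz_eqN1; rewrite ?lorentz_acoord_self //.
- exists z; split=> [|z' [e e']].
    by split; [apply/(on_circle_lorentz z wC) | apply/(on_circle_lorentz z wC')].
  by apply: uniq; split; [apply/(on_circle_lorentz z' wC) | apply/(on_circle_lorentz z' wC')].
- move=> z' [h h']; apply: (disj z').
  by split; [apply/(interior_lorentz z' wC) | apply/(interior_lorentz z' wC')].
Qed.

Lemma descartes_lorentz_gram D : descartes_config D ->
  forall i j : 'I_4,
    lorentz (acoord_of (D i)) (acoord_of (D j)) = if i == j then 1 else -1.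
Proof.
move=> [wf [tg orient]] i j; case: eqVneq => [->|ij].
  exact: lorentz_acoord_self.
case: orient => disj.
  exact: lorentz_acoord_tangent (wf i) (wf j) (tg _ _ ij) (disj _ _ ij).
rewrite -[LHS]opprK -lorentz_reverse lorentz_sym -lorentz_reverse lorentz_sym.
exact: lorentz_acoord_tangent (wf_reverse (wf i)) (wf_reverse (wf j))
  (tangent_reverse (tg _ _ ij)) (disj _ _ ij).
Qed.

Definition acomp (a : acoord) (c : 'I_4) : R :=
  nth 0 [:: co_curv a; curv a; curv_x a; curv_y a] c.

Definition acoord_integral (a : acoord) : Prop :=
  [/\ curv a \is a Num.int, curv_x a \is a Num.int & curv_y a \is a Num.int].

Lemma acomp_int a c : acoord_integral a -> c != 0 -> acomp a c \is a Num.int.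
Proof. by case=> ? ? ?; case: c => [[|[|[|[|?]]]] ?]. Qed.

Definition lorentz_mx : 'M[R]_4 := \matrix_(c, c')
  nth 0 (nth [::] [:: [:: 0; - 2^-1; 0; 0]; [:: - 2^-1; 0; 0; 0];
                      [:: 0; 0; 1; 0]; [:: 0; 0; 0; 1]] c) c'.

Definition lorentz_inv_mx : 'M[R]_4 := \matrix_(c, c')
  nth 0 (nth [::] [:: [:: 0; -2; 0; 0]; [:: -2; 0; 0; 0];
                      [:: 0; 0; 1; 0]; [:: 0; 0; 0; 1]] c) c'.

Definition gram_mx : 'M[R]_4 := \matrix_(i, j) (if i == j then 1 else -1).

Definition gram_inv_mx : 'M[R]_4 := \matrix_(i, j) ((i == j)%:R / 2 - 4^-1).

Lemma lorentz_inv_mxK : lorentz_inv_mx *m lorentz_mx = 1%:M.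
Proof.
apply/matrixP => i j; rewrite !mxE big_ord4 !mxE.
by case: i j => [[|[|[|[|?]]]] ?] [[|[|[|[|?]]]] ?] //=; field.
Qed.

Lemma gram_inv_mxK : gram_mx *m gram_inv_mx = 1%:M.
Proof.
apply/matrixP => i j; rewrite !mxE big_ord4 !mxE.
by case: i j => [[|[|[|[|?]]]] ?] [[|[|[|[|?]]]] ?] //=; field.
Qed.

Lemma lorentz_inv_int c c' : lorentz_inv_mx c c' \is a Num.int.
Proof.
rewrite mxE; case: c c' => [[|[|[|[|?]]]] ?] [[|[|[|[|?]]]] ?] //=.
all: by rewrite ?rpredN ?natr_int.
Qed.

Section Quadruple.
Variable x : 'I_4 -> acoord.
Hypothesis gram_x : forall i j, lorentz (x i) (x j) = if i == j then 1 else -1.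

Definition aug_mx : 'M[R]_4 := \matrix_(i, c) acomp (x i) c.

Lemma aug_mx_gram : aug_mx *m lorentz_mx *m aug_mx^T = gram_mx.
Proof.
apply/matrixP => i j; rewrite !mxE -gram_x big_ord4 !mxE !big_ord4 !mxE /=.
by rewrite /lorentz /acomp /=; field.
Qed.

Lemma dual_gram c c' :
  (\sum_i acomp (x i) c * acomp (x i) c') / 2
  - (\sum_i acomp (x i) c) * (\sum_i acomp (x i) c') / 4 = lorentz_inv_mx c c'.
Proof.
have := mulmx_congruence_inv aug_mx_gram gram_inv_mxK lorentz_inv_mxK.
by move/matrixP/(_ c c') <-; rewrite !mxE !big_ord4 !mxE !big_ord4 !mxE /=; field.
Qed.

Definition excess c : R :=
  acomp (x 3) c - (acomp (x 0) c + acomp (x 1) c + acomp (x 2) c).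

Definition offdiag_sum c c' : R :=
  acomp (x 0) c * (acomp (x 1) c' + acomp (x 2) c')
  + acomp (x 1) c * (acomp (x 0) c' + acomp (x 2) c')
  + acomp (x 2) c * (acomp (x 0) c' + acomp (x 1) c').

(* For [c = c' = 1] this is Descartes' theorem
   [(b4 - b1 - b2 - b3)^2 = 4 (b1 b2 + b1 b3 + b2 b3)]. *)
Lemma excess_mul c c' :
  excess c * excess c' = 4 * lorentz_inv_mx c c' + 2 * offdiag_sum c c'.
Proof. by rewrite -dual_gram !big_ord4 /excess /offdiag_sum; field. Qed.

Lemma excess_norm : excess 2 ^+ 2 + excess 3 ^+ 2 - excess 0 * excess 1 = 4.
Proof.
transitivity (lorentz (x 0) (x 0) + lorentz (x 1) (x 1) + lorentz (x 2) (x 2)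
  + lorentz (x 3) (x 3) - 2 * (lorentz (x 3) (x 0) + lorentz (x 3) (x 1)
  + lorentz (x 3) (x 2)) + 2 * (lorentz (x 0) (x 1) + lorentz (x 0) (x 2)
  + lorentz (x 1) (x 2))).
  by rewrite /excess /lorentz /acomp /=; field.
by rewrite !gram_x /=; ring.
Qed.

(* Take determinants in [X^T (J - I) X = (d d^T - 4 E) / 2], where [X] has the
   rows (b, b x, b y) of the first three circles, [det (J - I) = 2], and
   [E = diag (0, 1, 1)] is the corresponding block of [lorentz_inv_mx]; the
   right-hand side has determinant [2 d_b^2]. *)
Lemma excess_det :
  excess 1 ^+ 2 = det3 (acomp (x 0) 1) (acomp (x 0) 2) (acomp (x 0) 3)
                       (acomp (x 1) 1) (acomp (x 1) 2) (acomp (x 1) 3)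
                       (acomp (x 2) 1) (acomp (x 2) 2) (acomp (x 2) 3) ^+ 2.
Proof.
have offdiag_excess c c' :
    offdiag_sum c c' = (excess c * excess c' - 4 * lorentz_inv_mx c c') / 2.
  by rewrite excess_mul; field.
have E : det3 (offdiag_sum 1 1) (offdiag_sum 1 2) (offdiag_sum 1 3)
              (offdiag_sum 2 1) (offdiag_sum 2 2) (offdiag_sum 2 3)
              (offdiag_sum 3 1) (offdiag_sum 3 2) (offdiag_sum 3 3)
         = 2 * det3 (acomp (x 0) 1) (acomp (x 0) 2) (acomp (x 0) 3)
                    (acomp (x 1) 1) (acomp (x 1) 2) (acomp (x 1) 3)
                    (acomp (x 2) 1) (acomp (x 2) 2) (acomp (x 2) 3) ^+ 2.
  by rewrite /offdiag_sum /det3; ring.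
rewrite !offdiag_excess !mxE /= in E.
apply: (mulfI (_ : 2 != 0)); first by rewrite pnatr_eq0.
by rewrite -E /det3; field.
Qed.

Hypothesis int_x : forall i, i != 3 -> acoord_integral (x i).

Let acomp_x_int i c : i != 3 -> c != 0 -> acomp (x i) c \is a Num.int.
Proof. by move=> /int_x; apply: acomp_int. Qed.

Local Ltac int_closure := repeat first
  [ done | apply: rpred1 | apply: rpredD | rewrite rpredN | apply: rpredM
  | apply: acomp_x_int ].

Lemma excess_mul_int c c' : c != 0 -> c' != 0 ->
  excess c * excess c' \is a Num.int.
Proof.
move=> c0 c'0; rewrite excess_mul rpredD ?rpredM ?lorentz_inv_int ?natr_int //.
by rewrite /offdiag_sum; int_closure.
Qed.

Lemma excess_half_sqr c : c != 0 -> c != 1 ->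
  (excess c / 2) ^+ 2 = 1 + (acomp (x 0) c * acomp (x 1) c
    + acomp (x 0) c * acomp (x 2) c + acomp (x 1) c * acomp (x 2) c).
Proof.
move=> c0 c1; rewrite expr_div_n expr2 excess_mul /offdiag_sum.
have -> : lorentz_inv_mx c c = 1.
  by move: c0 c1; rewrite mxE; case: c => [[|[|[|[|?]]]] ?].
by field.
Qed.

Lemma excess_int c : c != 0 -> excess c \is a Num.int.
Proof.
have b_int : excess 1 \is a Num.int.
  by apply: int_of_sqr_eq excess_det; rewrite /det3; int_closure.
move=> c0; have [-> //|c1] := eqVneq c 1.
have [b0|b_neq0] := eqVneq (excess 1) 0; last first.
  by apply: (int_of_mul_sqr b_int b_neq0); rewrite ?expr2 excess_mul_int.
have half_int : excess c / 2 \is a Num.int.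
  apply: int_of_sqr_le1.
    by rewrite excess_half_sqr //; int_closure.
  have c23 : c = 2 \/ c = 3.
    by move: c0 c1; case: c => [[|[|[|[|?]]]] ?] // _ _; [left|right]; apply: val_inj.
  have := excess_norm; rewrite b0 mulr0 subr0 expr_div_n.
  by have := sqr_ge0 (excess 2); have := sqr_ge0 (excess 3); case: c23 => ->; lra.
have -> : excess c = excess c / 2 * 2 by field.
by rewrite rpredM ?natr_int.
Qed.

Lemma acoord_integral_last : acoord_integral (x 3).
Proof.
have comp_int c : c != 0 -> acomp (x 3) c \is a Num.int.
  move=> c0.
  rewrite -(subrK (acomp (x 0) c + acomp (x 1) c + acomp (x 2) c) (acomp (x 3) c)).
  by rewrite rpredD ?excess_int //; int_closure.
by split; [exact: (comp_int 1) | exact: (comp_int 2) | exact: (comp_int 3)].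
Qed.

End Quadruple.

Lemma descartes_config_perm D (s : {perm 'I_4}) :
  descartes_config D -> descartes_config (D \o s).
Proof.
move=> [wf [tg orient]]; split=> [i|]; first exact: wf.
split=> [i j ij|]; first by apply: tg; rewrite (inj_eq perm_inj).
by case: orient => disj; [left|right] => i j ij; apply: disj; rewrite (inj_eq perm_inj).
Qed.

Lemma descartes_integral D k : descartes_config D ->
  (forall i, i != k -> acoord_integral (acoord_of (D i))) ->
  forall i, acoord_integral (acoord_of (D i)).
Proof.
move=> DD int_k i; have [-> {i}|] := eqVneq i k; last exact: int_k.
have := descartes_lorentz_gram (descartes_config_perm (tperm k 3) DD).
move=> /acoord_integral_last /=; rewrite tpermR; apply=> i i3.
by apply: int_k; rewrite -{2}(tpermR k 3) (inj_eq perm_inj).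
Qed.

Lemma cc_matrix_row_int D i :
  (forall j, cc_matrix D i j \is a Num.int) <-> acoord_integral (acoord_of (D i)).
Proof.
split=> [row_int|[? ? ?] j]; last by rewrite mxE; case: j => [[|[|[|?]]] ?].
by split; [have := row_int 0 | have := row_int 1 | have := row_int 2]; rewrite mxE.
Qed.
End AugmentedCoordinates.

Theorem theorem9p1 (R : realType) (D : 'I_4 -> ocircle R) :
  descartes_config D ->
  ((forall (i : 'I_4) (j : 'I_3), cc_matrix D i j \is a Num.int) <->
   exists k : 'I_4, forall i : 'I_4, i != k ->
     forall j : 'I_3, cc_matrix D i j \is a Num.int) /\
  ((forall (i : 'I_4) (j : 'I_3), cc_matrix D i j \is a Num.int) <->
   exists k : 'I_4, forall i : 'I_4, i != k ->
     [/\ curvature (D i) \is a Num.int,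
         (curv_center (D i)).1 \is a Num.int &
         (curv_center (D i)).2 \is a Num.int]).
Proof.
move=> DD.
have all_int k : (forall i, i != k -> acoord_integral (acoord_of (D i))) ->
    forall i j, cc_matrix D i j \is a Num.int.
  by move=> int_k i; apply/cc_matrix_row_int/(descartes_integral DD int_k).
split; split=> [M_int|[k int_k]].
- by exists 0 => i _; apply: M_int.
- by apply: (all_int k) => i ik; apply/cc_matrix_row_int/int_k.
- by exists 0 => i _; apply/cc_matrix_row_int.
- exact: all_int int_k.
Qed.
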